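(* $\mathrm{Inv}(\mathcal{D})\subseteq\mathrm{Aut}(\mathcal{C}^\infty(I^2,\mathbb{C}))$; that is, for every $\star$-invertible $d\in\mathcal{D}$, the map $\varphi\mapsto d\star\varphi$ is an automorphism of the additive group $(\mathcal{C}^\infty(I^2),+)$.
   Context: Let $I\subset\mathbb{R}$ be compact and $\mathcal{C}^\infty(I^2)=\mathcal{C}^\infty(I^2,\mathbb{C})$ the complex-valued functions smooth on an open neighbourhood of $I^2$. $\mathcal{D}$ is the set of objects $d(x,y)=\sum_{i=-1}^{\infty}\tilde d_i(x,y)\delta^{(i)}(x-y)$ with $\tilde d_i\in\mathcal{C}^\infty(I^2)$, where $\delta^{(i)}$ for $i\ge0$ is the $i$th derivative of the Dirac delta and $\delta^{(-1)}:=\Theta$ is the Heaviside function ($\Theta(0)=1$). The product is $(d\star e)(x,y)=\int_I d(x,\tau)e(\tau,y)\,d\tau$ (well defined via Mikusiński weak limits of smooth functions), with unit $\delta(x-y)$; $\mathrm{Inv}(\mathcal{D})$ is the set of $\star$-invertible elements of $\mathcal{D}$. *)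

From Stdlib Require Export Reals List.
From Coquelicot Require Export Coquelicot.

Open Scope R_scope.

Definition inI (a b x : R) : Prop := a <= x <= b.
Definition inI2 (a b x y : R) : Prop := inI a b x /\ inI a b y.

Fixpoint Ck (U : R * R -> Prop) (k : nat) (g : R -> R -> R) : Prop :=
  (forall p, U p -> continuous (fun q : R * R => g (fst q) (snd q)) p) /\
  match k with
  | O => True
  | S k' =>
      (forall p, U p -> ex_derive (fun t => g t (snd p)) (fst p)
                     /\ ex_derive (fun t => g (fst p) t) (snd p)) /\
      Ck U k' (fun x y => Derive (fun t => g t y) x) /\
      Ck U k' (fun x y => Derive (fun t => g x t) y)
  end.

Definition smooth_nbhd (a b : R) (f : R -> R -> C) : Prop :=
  exists U : R * R -> Prop, open U /\
    (forall x y, inI2 a b x y -> U (x, y)) /\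
    forall k, Ck U k (fun x y => Re (f x y)) /\ Ck U k (fun x y => Im (f x y)).

(** h (given pointwise) defines an element of C^infty(I^2): it agrees on I^2
    with a function smooth on a neighbourhood of I^2. *)
Definition inCinf (a b : R) (h : R -> R -> C) : Prop :=
  exists g, smooth_nbhd a b g /\ forall x y, inI2 a b x y -> g x y = h x y.

Definition cRInt (g : R -> C) (u v : R) : C :=
  (RInt (fun t => Re (g t)) u v, RInt (fun t => Im (g t)) u v).
Definition cDerive (g : R -> C) : R -> C :=
  fun t => (Derive (fun s => Re (g s)) t, Derive (fun s => Im (g s)) t).
Fixpoint cDerive_n (n : nat) (g : R -> C) : R -> C :=
  match n with O => g | S n' => cDerive (cDerive_n n' g) end.

(** An element d(x,y) = theta(x,y) Θ(x-y) + sum_{i} deltas_i(x,y) δ^(i)(x-y)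
    of D (finitely many delta terms; the i-th list entry is the coefficient of
    δ^(i), i >= 0). *)
Record Dker : Type := mkD { theta : R -> R -> C ; deltas : list (R -> R -> C) }.

Definition inD (a b : R) (d : Dker) : Prop :=
  smooth_nbhd a b (theta d) /\ List.Forall (smooth_nbhd a b) (deltas d).

(** sum_i  ∫ c_i(x,τ) δ^(i)(x-τ) ψ(τ) dτ  =  sum_i ∂_τ^i [c_i(x,τ) ψ(τ)] |_{τ=x} *)
Fixpoint act_deltas (l : list (R -> R -> C)) (i : nat) (psi : R -> C) (x : R)
  : C :=
  match l with
  | nil => RtoC 0
  | c :: l' => Cplus (cDerive_n i (fun t => Cmult (c x t) (psi t)) x)
                     (act_deltas l' (S i) psi x)
  end.

(** (d ⋆ ψ)(x) = ∫_I d(x,τ) ψ(τ) dτ, with Θ(x-τ) restricting to a <= τ <= x. *)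
Definition act (a : R) (d : Dker) (psi : R -> C) (x : R) : C :=
  Cplus (cRInt (fun t => Cmult (theta d x t) (psi t)) a x)
        (act_deltas (deltas d) 0 psi x).

Definition star_fun (a : R) (d : Dker) (phi : R -> R -> C) : R -> R -> C :=
  fun x y => act a d (fun t => phi t y) x.

(** d ⋆ e = δ(x-y) as distributions on I^2: for every smooth test function
    Φ on I^2,  ∫_I ∫_I ∫_I d(x,τ) e(τ,y) Φ(x,y) dy dτ dx = ∫_I Φ(x,x) dx. *)
Definition star_is_delta (a b : R) (d e : Dker) : Prop :=
  forall Phi : R -> R -> C, smooth_nbhd a b Phi ->
    cRInt (fun x => act a d (fun t => act a e (fun y => Phi x y) t) x) a b
    = cRInt (fun x => Phi x x) a b.

Definition starInv (a b : R) (d : Dker) : Prop :=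
  inD a b d /\
  exists e, inD a b e /\ star_is_delta a b d e /\ star_is_delta a b e d.

(** F is an automorphism of the additive group (C^infty(I^2), +), elements of
    C^infty(I^2) being represented by functions smooth on a neighbourhood of
    I^2 and identified when they agree on I^2. *)
Definition additive_aut_Cinf (a b : R) (F : (R -> R -> C) -> (R -> R -> C))
  : Prop :=
  (forall phi, smooth_nbhd a b phi -> inCinf a b (F phi)) /\
  (forall phi psi, smooth_nbhd a b phi -> smooth_nbhd a b psi ->
     (forall x y, inI2 a b x y -> phi x y = psi x y) ->
     forall x y, inI2 a b x y -> F phi x y = F psi x y) /\
  (forall phi psi, smooth_nbhd a b phi -> smooth_nbhd a b psi ->
     forall x y, inI2 a b x y ->
       F (fun u v => Cplus (phi u v) (psi u v)) x y
       = Cplus (F phi x y) (F psi x y)) /\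
  (forall phi psi, smooth_nbhd a b phi -> smooth_nbhd a b psi ->
     (forall x y, inI2 a b x y -> F phi x y = F psi x y) ->
     forall x y, inI2 a b x y -> phi x y = psi x y) /\
  (forall psi, smooth_nbhd a b psi ->
     exists phi, smooth_nbhd a b phi /\
       forall x y, inI2 a b x y -> F phi x y = psi x y).

(* By compactness of I², all data are smooth on a common box (a-r, b+r)², and there d ⋆ φ is smooth:
   the Volterra integral ∫_c^x u(x,t) v(t,y) dt has partial derivatives of the same form plus the
   diagonal term u(x,x) v(x,y), and u(x,x) = u(x,c) + ∫_c^x ∂₂u(x,t) dt is again such an integral;
   the δ-terms are handled by Leibniz's rule. The action is additive and only sees values on I,
   because all derivatives of a smooth function vanishing on I vanish on I. Finally, if e is a
   ⋆-inverse of d, testing e ⋆ d = δ and d ⋆ e = δ against test functions conj(χ(x)) ψ(y) shows that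
   φ ↦ d ⋆ φ is injective and that φ ↦ e ⋆ φ is a right inverse of it. *)

From Stdlib Require Import Lra FunctionalExtensionality ClassicalEpsilon Classical.

(** * C^k functions on open subsets of R^2 *)

Definition D1 (f : R -> R -> R) : R -> R -> R := fun x y => Derive (fun t => f t y) x.
Definition D2 (f : R -> R -> R) : R -> R -> R := fun x y => Derive (fun t => f x t) y.

Lemma locally_fst_slice (P : R * R -> Prop) x y :
  locally (x, y) P -> locally x (fun t => P (t, y)).
Proof. intros [eps H]. exists eps. intros t Ht. apply H. split; [exact Ht | apply ball_center]. Qed.

Lemma locally_snd_slice (P : R * R -> Prop) x y :
  locally (x, y) P -> locally y (fun t => P (x, t)).
Proof. intros [eps H]. exists eps. intros t Ht. apply H. split; [apply ball_center | exact Ht]. Qed.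

Lemma continuous_fst_slice (f : R -> R -> R) x y :
  continuous (fun q : R * R => f (fst q) (snd q)) (x, y) -> continuous (fun t => f t y) x.
Proof.
  intros H. apply (continuous_comp_2 (fun t => t) (fun _ => y) f);
    [apply continuous_id | apply continuous_const | exact H].
Qed.

Lemma continuous_snd_slice (f : R -> R -> R) x y :
  continuous (fun q : R * R => f (fst q) (snd q)) (x, y) -> continuous (fun t => f x t) y.
Proof.
  intros H. apply (continuous_comp_2 (fun _ => x) (fun t => t) f);
    [apply continuous_const | apply continuous_id | exact H].
Qed.

Lemma Ck_continuous U k f p :
  Ck U k f -> U p -> continuous (fun q : R * R => f (fst q) (snd q)) p.
Proof. destruct k; intros [H _]; auto. Qed.

Lemma Ck_S U k f : Ck U (S k) f -> Ck U k f.
Proof.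
  revert f; induction k as [|k IH]; intros f [Hc [Hd [H1 H2]]].
  - split; [exact Hc | exact I].
  - split; [exact Hc|]. split; [exact Hd|]. split; apply IH; assumption.
Qed.

Lemma Ck_subset U V k f : (forall p, V p -> U p) -> Ck U k f -> Ck V k f.
Proof.
  intros HVU; revert f; induction k as [|k IH]; intros f [Hc H].
  - split; auto.
  - destruct H as [Hd [H1 H2]]. repeat split; auto; apply Hd; auto.
Qed.

Lemma Ck_const U k c : Ck U k (fun _ _ => c).
Proof.
  revert c; induction k as [|k IH]; intros c; (split; [intros; apply continuous_const|]); auto.
  split; [intros; split; apply ex_derive_const|].
  replace (fun x y : R => Derive (fun _ : R => c) x) with (fun _ _ : R => 0)
    by (do 2 (apply functional_extensionality; intro); symmetry; apply Derive_const).
  replace (fun x y : R => Derive (fun _ : R => c) y) with (fun _ _ : R => 0)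
    by (do 2 (apply functional_extensionality; intro); symmetry; apply Derive_const).
  auto.
Qed.

Section Ck_open.

Variable U : R * R -> Prop.
Hypothesis U_open : open U.

Lemma Ck_ext k f g : (forall x y, U (x, y) -> f x y = g x y) -> Ck U k f -> Ck U k g.
Proof.
  revert f g; induction k as [|k IH]; intros f g Hfg Hf.
  all: assert (Hcont : forall p, U p -> continuous (fun q : R * R => g (fst q) (snd q)) p)
         by (intros [x y] Hp; apply (continuous_ext_loc _ (fun q : R * R => f (fst q) (snd q)));
             [apply (filter_imp U); [intros [] ?; auto | apply U_open; exact Hp]
             | apply (Ck_continuous U _ _ _ Hf Hp)]).
  - split; auto.
  - destruct Hf as [_ [Hd [H1 H2]]].
    assert (Lx : forall x y, U (x, y) -> locally x (fun t => f t y = g t y)).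
    { intros x y Hp. apply (filter_imp (fun t => U (t, y))); [intros; auto|].
      apply (locally_fst_slice U), U_open, Hp. }
    assert (Ly : forall x y, U (x, y) -> locally y (fun t => f x t = g x t)).
    { intros x y Hp. apply (filter_imp (fun t => U (x, t))); [intros; auto|].
      apply (locally_snd_slice U), U_open, Hp. }
    split; [exact Hcont|]. split; [|split].
    + intros [x y] Hp; destruct (Hd _ Hp) as [Dx Dy];
        split; [apply (ex_derive_ext_loc _ _ _ (Lx x y Hp) Dx)
               |apply (ex_derive_ext_loc _ _ _ (Ly x y Hp) Dy)].
    + apply (IH (D1 f)); auto. intros x y Hp. apply Derive_ext_loc, Lx, Hp.
    + apply (IH (D2 f)); auto. intros x y Hp. apply Derive_ext_loc, Ly, Hp.
Qed.

Lemma Ck_plus k f g : Ck U k f -> Ck U k g -> Ck U k (fun x y => f x y + g x y).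
Proof.
  revert f g; induction k as [|k IH]; intros f g Hf Hg.
  all: assert (Hcont : forall p, U p -> continuous (fun q : R * R => f (fst q) (snd q) + g (fst q) (snd q)) p)
         by (intros p Hp; apply (continuous_plus (fun q : R * R => f (fst q) (snd q)));
             eapply Ck_continuous; eauto).
  - split; auto.
  - destruct Hf as [_ [Hfd [Hf1 Hf2]]], Hg as [_ [Hgd [Hg1 Hg2]]].
    split; [exact Hcont|]. split; [|split].
    + intros p Hp; destruct (Hfd p Hp), (Hgd p Hp); split;
        [apply (ex_derive_plus (fun t => f t (snd p)) (fun t => g t (snd p)))
        |apply (ex_derive_plus (fun t => f (fst p) t) (fun t => g (fst p) t))]; auto.
    + apply (Ck_ext _ (fun x y => D1 f x y + D1 g x y)); auto.
      intros x y Hp; destruct (Hfd _ Hp), (Hgd _ Hp). symmetry; apply Derive_plus; auto.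
    + apply (Ck_ext _ (fun x y => D2 f x y + D2 g x y)); auto.
      intros x y Hp; destruct (Hfd _ Hp), (Hgd _ Hp). symmetry; apply Derive_plus; auto.
Qed.

Lemma Ck_mult k f g : Ck U k f -> Ck U k g -> Ck U k (fun x y => f x y * g x y).
Proof.
  revert f g; induction k as [|k IH]; intros f g Hf Hg.
  all: assert (Hcont : forall p, U p -> continuous (fun q : R * R => f (fst q) (snd q) * g (fst q) (snd q)) p)
         by (intros p Hp; apply (continuous_mult (fun q : R * R => f (fst q) (snd q)));
             eapply Ck_continuous; eauto).
  - split; auto.
  - pose proof (Ck_S _ _ _ Hf) as Hf'; pose proof (Ck_S _ _ _ Hg) as Hg'.
    destruct Hf as [_ [Hfd [Hf1 Hf2]]], Hg as [_ [Hgd [Hg1 Hg2]]].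
    split; [exact Hcont|]. split; [|split].
    + intros p Hp; destruct (Hfd p Hp), (Hgd p Hp); split;
        [apply (ex_derive_mult (fun t => f t (snd p)) (fun t => g t (snd p)))
        |apply (ex_derive_mult (fun t => f (fst p) t) (fun t => g (fst p) t))]; auto.
    + apply (Ck_ext _ (fun x y => D1 f x y * g x y + f x y * D1 g x y)); [|apply Ck_plus; auto].
      intros x y Hp; destruct (Hfd _ Hp), (Hgd _ Hp).
      symmetry; apply (Derive_mult (fun t => f t y) (fun t => g t y)); auto.
    + apply (Ck_ext _ (fun x y => D2 f x y * g x y + f x y * D2 g x y)); [|apply Ck_plus; auto].
      intros x y Hp; destruct (Hfd _ Hp), (Hgd _ Hp).
      symmetry; apply (Derive_mult (fun t => f x t) (fun t => g x t)); auto.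
Qed.

Lemma Ck_scal k c f : Ck U k f -> Ck U k (fun x y => c * f x y).
Proof. apply Ck_mult, Ck_const. Qed.

Lemma Ck_minus k f g : Ck U k f -> Ck U k g -> Ck U k (fun x y => f x y - g x y).
Proof.
  intros Hf Hg. apply (Ck_ext _ (fun x y => f x y + -1 * g x y)); [intros; ring|].
  apply Ck_plus, Ck_scal; assumption.
Qed.

End Ck_open.

Lemma Ck_swap U k f : (forall x y, U (x, y) -> U (y, x)) ->
  Ck U k f -> Ck U k (fun x y => f y x).
Proof.
  intros HU; revert f; induction k as [|k IH]; intros f [Hc Hf].
  all: assert (Hcont : forall p, U p -> continuous (fun q : R * R => f (snd q) (fst q)) p)
         by (intros [x y] Hp; apply (continuous_comp_2 snd fst f);
             [apply continuous_snd | apply continuous_fst | apply (Hc (y, x)), HU, Hp]).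
  - split; auto.
  - destruct Hf as [Hd [H1 H2]]. split; [exact Hcont|]. split; [|split].
    + intros [x y] Hp. destruct (Hd (y, x)) as [Dy Dx]; [apply HU, Hp|]. split; assumption.
    + apply (IH (D2 f)), H2.
    + apply (IH (D1 f)), H1.
Qed.

Lemma Ck_fix_snd U k f c : (forall x y, U (x, y) -> U (x, c)) ->
  Ck U k f -> Ck U k (fun x _ => f x c).
Proof.
  intros HU; revert f; induction k as [|k IH]; intros f [Hc Hf].
  all: assert (Hcont : forall p, U p -> continuous (fun q : R * R => f (fst q) c) p)
         by (intros [x y] Hp; apply (continuous_comp_2 fst (fun _ => c) f);
             [apply continuous_fst | apply continuous_const | apply (Hc (x, c)), (HU x y), Hp]).
  - split; auto.
  - destruct Hf as [Hd [H1 H2]]. split; [exact Hcont|]. split; [|split].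
    + intros [x y] Hp. split; [apply (Hd (x, c)), (HU x y), Hp | apply ex_derive_const].
    + apply (IH (D1 f)), H1.
    + replace (fun x y : R => Derive (fun _ : R => f x c) y) with (fun _ _ : R => 0)
        by (do 2 (apply functional_extensionality; intro); symmetry; apply Derive_const).
      apply Ck_const.
Qed.

(** * Boxes around I^2 *)

Definition inIe (a b e x : R) : Prop := a - e < x < b + e.
Definition inIe2 (a b e : R) (p : R * R) : Prop := inIe a b e (fst p) /\ inIe a b e (snd p).

Lemma open_inIe a b e : open (inIe a b e).
Proof. apply open_and; [apply open_gt | apply open_lt]. Qed.

Lemma open_inIe2 a b e : open (inIe2 a b e).
Proof.
  apply open_and; apply (open_comp _ (inIe a b e)); try apply open_inIe; intros p _;
    [apply continuous_fst | apply continuous_snd].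
Qed.

Lemma inI_inIe a b e x : 0 < e -> inI a b x -> inIe a b e x.
Proof. unfold inI, inIe; lra. Qed.

Lemma inIe_le a b e e' x : e' <= e -> inIe a b e' x -> inIe a b e x.
Proof. unfold inIe; lra. Qed.

Lemma inIe_between a b e p q t :
  inIe a b e p -> inIe a b e q -> Rmin p q <= t <= Rmax p q -> inIe a b e t.
Proof. unfold inIe, Rmin, Rmax; destruct Rle_dec; lra. Qed.

Lemma inIe_margin a b e x : inIe a b e x ->
  exists eps : posreal, forall t, x - eps <= t <= x + eps -> inIe a b e t.
Proof.
  intros Hx. destruct (open_inIe a b e x Hx) as [eps Heps].
  assert (H2 : 0 < eps / 2) by (pose proof (cond_pos eps); lra).
  exists (mkposreal _ H2). intros t Ht. apply Heps. simpl in Ht.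
  change (Rabs (t - x) < eps). apply Rabs_def1; pose proof (cond_pos eps); lra.
Qed.

Lemma inIe_locally_2d a b e x y : inIe a b e x -> inIe a b e y ->
  locally_2d (fun u v => inIe a b e u /\ inIe a b e v) x y.
Proof.
  intros Hx Hy. apply locally_2d_locally.
  apply (open_inIe2 a b e (x, y)). split; assumption.
Qed.

Lemma inIe2_subset_open a b (U : R * R -> Prop) : a <= b -> open U ->
  (forall x y, inI2 a b x y -> U (x, y)) -> exists r, 0 < r /\ forall p, inIe2 a b r p -> U p.
Proof.
  intros Hab HU HI.
  assert (Hex : forall p : R * R, exists r : posreal, inI2 a b (fst p) (snd p) ->
             forall x y, Rabs (x - fst p) < 2 * r -> Rabs (y - snd p) < 2 * r -> U (x, y)).
  { intros [u v]. simpl. destruct (classic (inI2 a b u v)) as [Hi|Hn].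
    - destruct (HU (u, v) (HI u v Hi)) as [eps Heps].
      assert (H2 : 0 < eps / 2) by (pose proof (cond_pos eps); lra).
      exists (mkposreal _ H2). intros _ x y Hx Hy. apply (Heps (x, y)).
      simpl in Hx, Hy. split; [change (Rabs (x - u) < eps) | change (Rabs (y - v) < eps)]; lra.
    - exists (mkposreal 1 Rlt_0_1). intros Hi; contradiction. }
  destruct (choice _ Hex) as [delta Hdelta].
  destruct (compactness_value_2d a b a b (fun u v => delta (u, v))) as [d Hd].
  exists (d / 2). split; [pose proof (cond_pos d); lra|].
  intros [x y] [Hx Hy]. unfold inIe in Hx, Hy. simpl in Hx, Hy. pose proof (cond_pos d).
  set (x' := Rmax a (Rmin b x)). set (y' := Rmax a (Rmin b y)).
  assert (Hx' : a <= x' <= b /\ Rabs (x - x') < d / 2).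
  { unfold x', Rmax, Rmin. repeat destruct Rle_dec; split; try lra; apply Rabs_def1; lra. }
  assert (Hy' : a <= y' <= b /\ Rabs (y - y') < d / 2).
  { unfold y', Rmax, Rmin. repeat destruct Rle_dec; split; try lra; apply Rabs_def1; lra. }
  destruct Hx' as [Hx'1 Hx'2], Hy' as [Hy'1 Hy'2].
  apply NNPP. intros HnU. apply (Hd x' y' Hx'1 Hy'1). intros [u [v [Hu [Hv [H1 [H2 H3]]]]]].
  apply HnU, (Hdelta (u, v) (conj Hu Hv)); simpl.
  - replace (x - u) with ((x - x') + (x' - u)) by ring.
    eapply Rle_lt_trans; [apply Rabs_triang | lra].
  - replace (y - v) with ((y - y') + (y' - v)) by ring.
    eapply Rle_lt_trans; [apply Rabs_triang | lra].
Qed.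

(** * Smooth functions on a box *)

Section Smooth.

Variables a b e : R.
Local Notation Ie := (inIe a b e).
Local Notation Ie2 := (inIe2 a b e).

Definition smooth (f : R -> R -> R) : Prop := forall k, Ck Ie2 k f.

Lemma smooth_continuous f x y : smooth f -> Ie x -> Ie y ->
  continuous (fun q : R * R => f (fst q) (snd q)) (x, y).
Proof. intros Hf Hx Hy. apply (Ck_continuous Ie2 0 f); [apply Hf | exact (conj Hx Hy)]. Qed.

Lemma smooth_D1 f : smooth f -> smooth (D1 f).
Proof. intros Hf k. apply (Hf (S k)). Qed.

Lemma smooth_D2 f : smooth f -> smooth (D2 f).
Proof. intros Hf k. apply (Hf (S k)). Qed.

Lemma smooth_ex_derive_fst f x y : smooth f -> Ie x -> Ie y -> ex_derive (fun t => f t y) x.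
Proof. intros Hf Hx Hy. apply ((proj1 (proj2 (Hf 1%nat))) (x, y)), (conj Hx Hy). Qed.

Lemma smooth_ex_derive_snd f x y : smooth f -> Ie x -> Ie y -> ex_derive (fun t => f x t) y.
Proof. intros Hf Hx Hy. apply ((proj1 (proj2 (Hf 1%nat))) (x, y)), (conj Hx Hy). Qed.

Lemma smooth_ext f g : (forall x y, Ie x -> Ie y -> f x y = g x y) -> smooth f -> smooth g.
Proof. intros Hfg Hf k. apply (Ck_ext _ (open_inIe2 a b e) k f); auto. intros x y []; auto. Qed.

Lemma smooth_const c : smooth (fun _ _ => c).
Proof. intros k. apply Ck_const. Qed.

Lemma smooth_plus f g : smooth f -> smooth g -> smooth (fun x y => f x y + g x y).
Proof. intros Hf Hg k. apply Ck_plus; [apply open_inIe2 | apply Hf | apply Hg]. Qed.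

Lemma smooth_minus f g : smooth f -> smooth g -> smooth (fun x y => f x y - g x y).
Proof. intros Hf Hg k. apply Ck_minus; [apply open_inIe2 | apply Hf | apply Hg]. Qed.

Lemma smooth_mult f g : smooth f -> smooth g -> smooth (fun x y => f x y * g x y).
Proof. intros Hf Hg k. apply Ck_mult; [apply open_inIe2 | apply Hf | apply Hg]. Qed.

Lemma smooth_scal c f : smooth f -> smooth (fun x y => c * f x y).
Proof. apply smooth_mult, smooth_const. Qed.

Lemma smooth_swap f : smooth f -> smooth (fun x y => f y x).
Proof. intros Hf k. apply Ck_swap; [intros x y []; split; assumption | apply Hf]. Qed.

Lemma smooth_fix_snd f c : Ie c -> smooth f -> smooth (fun x _ => f x c).
Proof. intros Hc Hf k. apply Ck_fix_snd; [intros x y []; split; assumption | apply Hf]. Qed.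

Lemma smooth_fix_fst f c : Ie c -> smooth f -> smooth (fun x _ => f c x).
Proof. intros Hc Hf. apply (smooth_fix_snd (fun x y => f y x)), smooth_swap; assumption. Qed.

(* Functions of one variable are encoded as functions of two variables constant in the second. *)
Definition smooth1 (h : R -> R) : Prop := smooth (fun s _ => h s).

Lemma smooth1_continuous h t : smooth1 h -> Ie t -> continuous h t.
Proof.
  intros Hh Ht. apply (continuous_fst_slice (fun s _ => h s) t t), (smooth_continuous _ t t Hh Ht Ht).
Qed.

Lemma smooth1_Derive_n h n : smooth1 h -> smooth1 (Derive_n h n).
Proof. intros Hh; induction n as [|n IH]; [exact Hh | apply (smooth_D1 _ IH)]. Qed.

Lemma smooth1_ex_derive_n h n s : smooth1 h -> Ie s -> ex_derive_n h n s.
Proof.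
  intros Hh Hs. destruct n as [|n]; [exact I|].
  apply (smooth_ex_derive_fst (fun t _ => Derive_n h n t) s s); auto. apply smooth1_Derive_n, Hh.
Qed.

Lemma smooth1_minus f g : smooth1 f -> smooth1 g -> smooth1 (fun t => f t - g t).
Proof. apply smooth_minus. Qed.

Lemma smooth1_mult f g : smooth1 f -> smooth1 g -> smooth1 (fun t => f t * g t).
Proof. apply smooth_mult. Qed.

Lemma smooth1_scal c f : smooth1 f -> smooth1 (fun t => c * f t).
Proof. apply smooth_scal. Qed.

Lemma smooth1_row u x : Ie x -> smooth u -> smooth1 (fun t => u x t).
Proof. apply smooth_fix_fst. Qed.

Lemma smooth1_col v y : Ie y -> smooth v -> smooth1 (fun t => v t y).
Proof. apply smooth_fix_snd. Qed.

Lemma smooth_tensor g h : smooth1 g -> smooth1 h -> smooth (fun x y => g x * h y).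
Proof. intros Hg Hh. apply smooth_mult; [exact Hg | apply (smooth_swap _ Hh)]. Qed.

Lemma Derive_n_lincomb f g al be n x : smooth1 f -> smooth1 g -> Ie x ->
  Derive_n (fun t => al * f t + be * g t) n x = al * Derive_n f n x + be * Derive_n g n x.
Proof.
  intros Hf Hg Hx.
  assert (Hloc : forall h, smooth1 h -> locally x (fun s => forall k, (k <= n)%nat -> ex_derive_n h k s)).
  { intros h Hh. apply (filter_imp Ie); [|apply open_inIe, Hx].
    intros s Hs k _. apply smooth1_ex_derive_n; assumption. }
  rewrite (Derive_n_plus (fun t => al * f t) (fun t => be * g t)), !Derive_n_scal_l; [reflexivity|..];
    apply Hloc, smooth1_scal; assumption.
Qed.

End Smooth.

(** * Volterra integrals *)

Lemma abs_RInt_le_segment (f : R -> R) p q M : ex_RInt f p q ->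
  (forall t, Rmin p q <= t <= Rmax p q -> Rabs (f t) <= M) ->
  Rabs (RInt f p q) <= Rabs (q - p) * M.
Proof.
  intros Hi Hb. destruct (Rle_dec p q).
  - rewrite (Rabs_right (q - p)) by lra. apply abs_RInt_le_const; auto.
    intros t Ht. apply Hb. rewrite Rmin_left, Rmax_right; lra.
  - rewrite <- (opp_RInt_swap f q p) by (apply ex_RInt_swap; auto).
    change (Rabs (- RInt f q p) <= Rabs (q - p) * M).
    rewrite Rabs_Ropp, (Rabs_left (q - p)), Ropp_minus_distr by lra.
    apply abs_RInt_le_const; [lra | apply ex_RInt_swap; auto |].
    intros t Ht. apply Hb. rewrite Rmin_right, Rmax_left; lra.
Qed.

Lemma Rabs_mult_sub_le A B A0 B0 :
  Rabs (A * B - A0 * B0) <= Rabs (A - A0) * Rabs B + Rabs A0 * Rabs (B - B0).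
Proof.
  replace (A * B - A0 * B0) with ((A - A0) * B + A0 * (B - B0)) by ring.
  rewrite <- !Rabs_mult. apply Rabs_triang.
Qed.

Lemma mult_frac_lt_half L eps : 0 <= L -> 0 < eps -> L * (eps / (2 * (L + 1))) < eps / 2.
Proof.
  intros HL He. apply (Rmult_lt_reg_r (2 * (L + 1))); [lra|].
  replace (L * (eps / (2 * (L + 1))) * (2 * (L + 1))) with (L * eps) by (field; lra). nra.
Qed.

Lemma continuous_bounded_segment (g : R -> R) lo hi :
  (forall t, lo <= t <= hi -> continuous g t) ->
  exists M, forall t, lo <= t <= hi -> Rabs (g t) <= M.
Proof.
  intros Hg. destruct (Rle_dec lo hi) as [Hle|Hlt]; [|exists 0; intros; lra].
  destruct (continuity_ab_maj (fun t => Rabs (g t)) lo hi Hle) as [m [Hm _]]; [|eauto].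
  intros t Ht. apply continuity_pt_filterlim, (continuous_comp g Rabs), continuous_Rabs. apply Hg, Ht.
Qed.

Lemma continuous2_locally_bounded (f : R -> R -> R) x0 y0 :
  continuous (fun q : R * R => f (fst q) (snd q)) (x0, y0) ->
  exists del : posreal, forall x y, Rabs (x - x0) < del -> Rabs (y - y0) < del ->
    Rabs (f x y) <= Rabs (f x0 y0) + 1.
Proof.
  intros H. destruct (proj1 (filterlim_locally _ _) H (mkposreal 1 Rlt_0_1)) as [del Hdel].
  exists del. intros x y Hx Hy.
  assert (H1 : Rabs (f x y - f x0 y0) < 1) by exact (Hdel (x, y) (conj Hx Hy)).
  pose proof (Rabs_triang_inv (f x y) (f x0 y0)). lra.
Qed.

Lemma continuous2_uniform_fst (f : R -> R -> R) x0 lo hi :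
  (forall t, lo <= t <= hi -> continuous (fun q : R * R => f (fst q) (snd q)) (x0, t)) ->
  forall eps : posreal, exists del : posreal, forall x t,
    Rabs (x - x0) < del -> lo <= t <= hi -> Rabs (f x t - f x0 t) < eps.
Proof.
  intros Hf eps. destruct (uniform_continuity_2d_1d' f lo hi x0) with (eps := eps) as [del Hdel].
  { intros t Ht. apply continuity_2d_pt_filterlim, Hf, Ht. }
  exists del. intros x t Hx Ht. pose proof (cond_pos del). apply Rabs_def2 in Hx.
  apply (Hdel t x0 t x); try lra. rewrite Rminus_eq_0, Rabs_R0. assumption.
Qed.

Lemma continuous2_uniform_snd (f : R -> R -> R) y0 lo hi :
  (forall t, lo <= t <= hi -> continuous (fun q : R * R => f (fst q) (snd q)) (t, y0)) ->
  forall eps : posreal, exists del : posreal, forall y t,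
    Rabs (y - y0) < del -> lo <= t <= hi -> Rabs (f t y - f t y0) < eps.
Proof.
  intros Hf eps. destruct (uniform_continuity_2d_1d f lo hi y0) with (eps := eps) as [del Hdel].
  { intros t Ht. apply continuity_2d_pt_filterlim, Hf, Ht. }
  exists del. intros y t Hy Ht. pose proof (cond_pos del). apply Rabs_def2 in Hy.
  apply (Hdel t y0 t y); try lra. rewrite Rminus_eq_0, Rabs_R0. assumption.
Qed.

(* Split ∫_c^x g(x,y) - ∫_c^x0 g(x0,y0) at x0: the part over [c,x0] is small by uniform convergence
   of the integrand, the part over [x0,x] because the integrand stays bounded. *)
Lemma continuous_RInt_param (g : R -> R -> R -> R) c x0 y0 :
  (forall eps : posreal, locally (x0, y0) (fun q : R * R =>
     forall t, Rmin c x0 <= t <= Rmax c x0 -> Rabs (g (fst q) (snd q) t - g x0 y0 t) < eps)) ->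
  (exists M, locally (x0, y0) (fun q : R * R =>
     forall t, Rmin x0 (fst q) <= t <= Rmax x0 (fst q) -> Rabs (g (fst q) (snd q) t) <= M)) ->
  locally (x0, y0) (fun q : R * R =>
     ex_RInt (g (fst q) (snd q)) c x0 /\ ex_RInt (g (fst q) (snd q)) x0 (fst q)) ->
  continuous (fun q : R * R => RInt (g (fst q) (snd q)) c (fst q)) (x0, y0).
Proof.
  intros Hunif [M HM] Hint. apply filterlim_locally. intros eps.
  set (L := Rabs (x0 - c)). set (N := Rabs M).
  assert (HL : 0 <= L) by apply Rabs_pos. assert (HN : 0 <= N) by apply Rabs_pos.
  pose proof (cond_pos eps) as Heps.
  assert (He1 : 0 < eps / (2 * (L + 1))) by (apply Rdiv_lt_0_compat; lra).
  assert (He2 : 0 < eps / (2 * (N + 1))) by (apply Rdiv_lt_0_compat; lra).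
  assert (Hx : locally (x0, y0) (fun q : R * R => Rabs (fst q - x0) < eps / (2 * (N + 1))))
    by (exists (mkposreal _ He2); intros [x y] [Hx _]; exact Hx).
  destruct (locally_singleton _ _ Hint) as [I0 _].
  generalize (filter_and _ _ (Hunif (mkposreal _ He1)) (filter_and _ _ HM (filter_and _ _ Hint Hx))).
  apply filter_imp. intros [x y] [Hd1 [HMq [[I1 I2] Hxq]]]. simpl in *.
  change (Rabs (RInt (g x y) c x - RInt (g x0 y0) c x0) < eps).
  replace (RInt (g x y) c x - RInt (g x0 y0) c x0)
    with (RInt (fun t => g x y t - g x0 y0 t) c x0 + RInt (g x y) x0 x).
  2:{ replace (RInt (fun t => g x y t - g x0 y0 t) c x0) with (RInt (g x y) c x0 - RInt (g x0 y0) c x0)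
        by (symmetry; exact (RInt_minus (g x y) (g x0 y0) c x0 I1 I0)).
      rewrite <- (RInt_Chasles (g x y) c x0 x I1 I2). simpl. unfold plus; simpl. ring. }
  assert (E1 : Rabs (RInt (fun t => g x y t - g x0 y0 t) c x0) <= L * (eps / (2 * (L + 1)))).
  { apply abs_RInt_le_segment; [apply (ex_RInt_minus (V := R_NormedModule)); auto|].
    intros t Ht. left. apply Hd1, Ht. }
  assert (E2 : Rabs (RInt (g x y) x0 x) <= N * (eps / (2 * (N + 1)))).
  { apply Rle_trans with (Rabs (x - x0) * N).
    - apply abs_RInt_le_segment; auto. intros t Ht. eapply Rle_trans; [apply HMq, Ht | apply Rle_abs].
    - rewrite Rmult_comm. apply Rmult_le_compat_l; lra. }
  pose proof (mult_frac_lt_half L eps HL Heps). pose proof (mult_frac_lt_half N eps HN Heps).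
  eapply Rle_lt_trans; [apply Rabs_triang | lra].
Qed.

Definition volterra (c : R) (u v : R -> R -> R) : R -> R -> R :=
  fun x y => RInt (fun t => u x t * v t y) c x.

Section Volterra.

Variables a b e : R.
Local Notation Ie := (inIe a b e).

Definition continuous2 (f : R -> R -> R) : Prop :=
  forall x y, Ie x -> Ie y -> continuous (fun q : R * R => f (fst q) (snd q)) (x, y).

Lemma smooth_continuous2 f : smooth a b e f -> continuous2 f.
Proof. intros Hf x y. apply smooth_continuous, Hf. Qed.

Lemma continuous_kernel u v x y t : continuous2 u -> continuous2 v -> Ie x -> Ie y -> Ie t ->
  continuous (fun t => u x t * v t y) t.
Proof.
  intros Hu Hv Hx Hy Ht. apply (continuous_mult (fun t => u x t) (fun t => v t y)).
  - apply continuous_snd_slice, Hu; assumption.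
  - apply continuous_fst_slice, Hv; assumption.
Qed.

Lemma ex_RInt_kernel u v x y p q : continuous2 u -> continuous2 v -> Ie x -> Ie y -> Ie p -> Ie q ->
  ex_RInt (fun t => u x t * v t y) p q.
Proof.
  intros Hu Hv Hx Hy Hp Hq. apply (ex_RInt_continuous (V := R_CompleteNormedModule)).
  intros t Ht. apply continuous_kernel; auto. apply (inIe_between a b e p q); assumption.
Qed.

Lemma kernel_uniform_close u v x0 y0 lo hi :
  continuous2 u -> continuous2 v -> Ie x0 -> Ie y0 -> Ie lo -> Ie hi ->
  forall eps : posreal, locally (x0, y0) (fun q : R * R => forall t, lo <= t <= hi ->
    Rabs (u (fst q) t * v t (snd q) - u x0 t * v t y0) < eps).
Proof.
  intros Hu Hv Hx0 Hy0 Hlo Hhi eps.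
  assert (Hseg : forall t, lo <= t <= hi -> Ie t).
  { intros t Ht. apply (inIe_between a b e lo hi); auto.
    pose proof (Rmin_l lo hi); pose proof (Rmax_r lo hi); lra. }
  destruct (continuous_bounded_segment (fun t => u x0 t) lo hi) as [Mu HMu].
  { intros t Ht. apply continuous_snd_slice, Hu; auto. }
  destruct (continuous_bounded_segment (fun t => v t y0) lo hi) as [Mv HMv].
  { intros t Ht. apply continuous_fst_slice, Hv; auto. }
  set (K := Rabs Mu + Rabs Mv + 2). set (eta := Rmin 1 (eps / K)).
  assert (HK : 2 <= K) by (unfold K; pose proof (Rabs_pos Mu); pose proof (Rabs_pos Mv); lra).
  assert (Heta : 0 < eta) by (apply Rmin_pos; [lra | apply Rdiv_lt_0_compat; [apply cond_pos | lra]]).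
  assert (Heta1 : eta <= 1) by apply Rmin_l.
  assert (HetaK : eta * K <= eps).
  { apply Rle_trans with (eps / K * K); [apply Rmult_le_compat_r; [lra | apply Rmin_r]|].
    right. field. lra. }
  destruct (continuous2_uniform_fst u x0 lo hi) with (eps := mkposreal eta Heta) as [du Hdu].
  { intros t Ht. apply Hu; auto. }
  destruct (continuous2_uniform_snd v y0 lo hi) with (eps := mkposreal eta Heta) as [dv Hdv].
  { intros t Ht. apply Hv; auto. }
  exists (mkposreal _ (Rmin_pos _ _ (cond_pos du) (cond_pos dv))). intros [x y] [Hx Hy] t Ht. simpl.
  change (Rabs (x - x0) < Rmin du dv) in Hx. change (Rabs (y - y0) < Rmin du dv) in Hy.
  pose proof (Rmin_l du dv); pose proof (Rmin_r du dv).
  assert (Hut : Rabs (u x t - u x0 t) < eta) by (apply Hdu; [lra | exact Ht]).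
  assert (Hvt : Rabs (v t y - v t y0) < eta) by (apply Hdv; [lra | exact Ht]).
  assert (Hvty : Rabs (v t y) <= Rabs Mv + 1).
  { replace (v t y) with (v t y0 + (v t y - v t y0)) by ring.
    pose proof (Rabs_triang (v t y0) (v t y - v t y0)); pose proof (HMv t Ht); pose proof (Rle_abs Mv).
    lra. }
  assert (Hux0 : Rabs (u x0 t) <= Rabs Mu) by (eapply Rle_trans; [apply HMu, Ht | apply Rle_abs]).
  eapply Rle_lt_trans; [apply Rabs_mult_sub_le|].
  apply Rle_lt_trans with (eta * (Rabs Mv + 1) + Rabs Mu * eta).
  - apply Rplus_le_compat; apply Rmult_le_compat; try apply Rabs_pos; lra.
  - unfold K in HetaK. nra.
Qed.

Lemma volterra_continuous c u v x0 y0 : continuous2 u -> continuous2 v -> Ie c -> Ie x0 -> Ie y0 ->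
  continuous (fun q : R * R => volterra c u v (fst q) (snd q)) (x0, y0).
Proof.
  intros Hu Hv Hc Hx0 Hy0.
  apply (continuous_RInt_param (fun x y t => u x t * v t y)).
  - apply kernel_uniform_close; auto; apply (inIe_between a b e c x0); auto;
      pose proof (Rmin_l c x0); pose proof (Rmax_l c x0); pose proof (Rmin_r c x0); pose proof (Rmax_r c x0);
      lra.
  - destruct (continuous2_locally_bounded u x0 x0) as [d1 H1]; [apply Hu; auto|].
    destruct (continuous2_locally_bounded v x0 y0) as [d2 H2]; [apply Hv; auto|].
    exists ((Rabs (u x0 x0) + 1) * (Rabs (v x0 y0) + 1)).
    exists (mkposreal _ (Rmin_pos _ _ (cond_pos d1) (cond_pos d2))). intros [x y] [Hx Hy] t Ht. simpl in *.
    change (Rabs (x - x0) < Rmin d1 d2) in Hx. change (Rabs (y - y0) < Rmin d1 d2) in Hy.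
    pose proof (Rmin_l d1 d2); pose proof (Rmin_r d1 d2).
    assert (Htx : Rabs (t - x0) < Rmin d1 d2).
    { eapply Rle_lt_trans; [|exact Hx]. revert Ht. unfold Rmin, Rmax; destruct Rle_dec; intros;
        unfold Rabs; repeat destruct Rcase_abs; lra. }
    rewrite Rabs_mult. apply Rmult_le_compat; try apply Rabs_pos; [apply H1 | apply H2]; lra.
  - apply (filter_imp (inIe2 a b e)); [|apply open_inIe2; split; assumption].
    intros [x y] [Hx Hy]. split; apply ex_RInt_kernel; assumption.
Qed.

End Volterra.

Section Volterra_smooth.

Variables a b e : R.
Local Notation Ie := (inIe a b e).
Local Notation smooth := (smooth a b e).

Lemma continuity_2d_pt_D1_kernel u v y x0 t0 : smooth u -> smooth v -> Ie y -> Ie x0 -> Ie t0 ->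
  continuity_2d_pt (fun x' t' => Derive (fun z => u z t' * v t' y) x') x0 t0.
Proof.
  intros Hu Hv Hy Hx Ht.
  apply (continuity_2d_pt_ext (fun x' t' => D1 u x' t' * v t' y));
    [intros; unfold D1; symmetry; apply Derive_scal_l|].
  assert (C1 : continuous (fun q : R * R => D1 u (fst q) (snd q)) (x0, t0))
    by (apply (smooth_continuous a b e); [apply smooth_D1|..]; assumption).
  assert (C2 : continuous (fun q : R * R => v (snd q) y) (x0, t0))
    by (apply (continuous_comp_2 snd (fun _ => y) v);
          [apply continuous_snd | apply continuous_const
          | apply (smooth_continuous a b e v t0 y); assumption]).
  apply continuity_2d_pt_filterlim. exact (continuous_mult _ _ _ C1 C2).
Qed.

Lemma continuity_2d_pt_D2_kernel u v x y0 t0 : smooth u -> smooth v -> Ie x -> Ie y0 -> Ie t0 ->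
  continuity_2d_pt (fun y' t' => Derive (fun z => u x t' * v t' z) y') y0 t0.
Proof.
  intros Hu Hv Hx Hy Ht.
  apply (continuity_2d_pt_ext (fun y' t' => u x t' * D2 v t' y'));
    [intros; unfold D2; symmetry; apply Derive_scal|].
  assert (C1 : continuous (fun q : R * R => u x (snd q)) (y0, t0))
    by (apply (continuous_comp_2 (fun _ => x) snd u);
          [apply continuous_const | apply continuous_snd
          | apply (smooth_continuous a b e u x t0); assumption]).
  assert (C2 : continuous (fun q : R * R => D2 v (snd q) (fst q)) (y0, t0))
    by (apply (continuous_comp_2 snd fst (D2 v));
          [apply continuous_snd | apply continuous_fst
          | apply (smooth_continuous a b e (D2 v) t0 y0); [apply smooth_D2|..]; assumption]).
  apply continuity_2d_pt_filterlim. exact (continuous_mult _ _ _ C1 C2).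
Qed.

Lemma volterra_derive_snd c u v x y : smooth u -> smooth v -> Ie c -> Ie x -> Ie y ->
  is_derive (fun y' => volterra c u v x y') y (volterra c u (D2 v) x y).
Proof.
  intros Hu Hv Hc Hx Hy.
  assert (Hseg : forall t, Rmin c x <= t <= Rmax c x -> Ie t)
    by (intros t; apply (inIe_between a b e c x t Hc Hx)).
  replace (volterra c u (D2 v) x y) with (RInt (fun t => Derive (fun z => u x t * v t z) y) c x)
    by (apply RInt_ext; intros t _; apply Derive_scal).
  apply (is_derive_RInt_param (fun z t => u x t * v t z) c x y).
  - apply (filter_imp Ie); [|apply open_inIe, Hy]. intros y' Hy' t Ht.
    apply ex_derive_scal, (smooth_ex_derive_snd a b e); auto.
  - intros t Ht. apply continuity_2d_pt_D2_kernel; auto.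
  - apply (filter_imp Ie); [|apply open_inIe, Hy]. intros y' Hy'.
    apply (ex_RInt_kernel a b e); auto; apply smooth_continuous2; assumption.
Qed.

Lemma volterra_derive_fst c u v x y : smooth u -> smooth v -> Ie c -> Ie x -> Ie y ->
  is_derive (fun x' => volterra c u v x' y) x (volterra c (D1 u) v x y + u x x * v x y).
Proof.
  intros Hu Hv Hc Hx Hy.
  assert (Cu := smooth_continuous2 a b e u Hu). assert (Cv := smooth_continuous2 a b e v Hv).
  destruct (inIe_margin a b e c Hc) as [ec Hec], (inIe_margin a b e x Hx) as [ex Hex].
  set (m := Rmin ec ex).
  assert (Hm : 0 < m /\ m <= ec /\ m <= ex)
    by (repeat split; [apply Rmin_pos; apply cond_pos | apply Rmin_l | apply Rmin_r]).
  (* the shape of the conclusion of is_derive_RInt_param_bound_comp, for the bounds c and x *)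
  replace (volterra c (D1 u) v x y + u x x * v x y) with
    (RInt (fun t => Derive (fun z => u z t * v t y) x) c x + - (u x c * v c y) * 0 + u x x * v x y * 1)
    by (unfold volterra; rewrite (RInt_ext _ (fun t => D1 u x t * v t y));
          [ring | intros t _; apply Derive_scal_l]).
  apply (is_derive_RInt_param_bound_comp (fun z t => u z t * v t y) (fun _ => c) (fun z => z) x 0 1).
  - apply (filter_imp Ie); [|apply open_inIe, Hx]. intros x' Hx'. apply (ex_RInt_kernel a b e); auto.
  - exists ec. apply (filter_imp Ie); [|apply open_inIe, Hx]. intros x' Hx'.
    pose proof (cond_pos ec). apply (ex_RInt_kernel a b e); auto; apply Hec; lra.
  - exists ex. apply (filter_imp Ie); [|apply open_inIe, Hx]. intros x' Hx'.
    pose proof (cond_pos ex). apply (ex_RInt_kernel a b e); auto; apply Hex; lra.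
  - apply (is_derive_const (K := R_AbsRing) (V := R_NormedModule)).
  - apply (is_derive_id (K := R_AbsRing)).
  - exists (mkposreal m (proj1 Hm)). apply (filter_imp Ie); [|apply open_inIe, Hx]. intros x' Hx' t Ht.
    assert (Jt : Ie t).
    { simpl in Ht. pose proof (Hec (c - m)); pose proof (Hec (c + m));
        pose proof (Hex (x - m)); pose proof (Hex (x + m)).
      unfold Rmin, Rmax in Ht; repeat destruct Rle_dec; unfold inIe in *; lra. }
    apply (ex_derive_mult (fun z => u z t) (fun _ => v t y));
      [apply (smooth_ex_derive_fst a b e) | apply ex_derive_const]; auto.
  - intros t Ht. apply continuity_2d_pt_D1_kernel; auto. apply (inIe_between a b e c x); auto.
  - apply (locally_2d_impl (fun x' t => Ie x' /\ Ie t));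
      [apply locally_2d_forall; intros x' t []; apply continuity_2d_pt_D1_kernel; auto
      | apply inIe_locally_2d; auto].
  - apply (locally_2d_impl (fun x' t => Ie x' /\ Ie t));
      [apply locally_2d_forall; intros x' t []; apply continuity_2d_pt_D1_kernel; auto
      | apply inIe_locally_2d; auto].
  - apply continuity_pt_filterlim, (continuous_kernel a b e); auto.
  - apply continuity_pt_filterlim, (continuous_kernel a b e); auto.
Qed.

Lemma diag_volterra u c x y : smooth u -> Ie c -> Ie x ->
  u x x = u x c + volterra c (D2 u) (fun _ _ => 1) x y.
Proof.
  intros Hu Hc Hx. unfold volterra.
  rewrite (RInt_ext _ (Derive (fun t => u x t))) by (intros t _; apply Rmult_1_r).
  rewrite RInt_Derive; [ring|..]; intros t Ht; assert (Jt : Ie t) by (apply (inIe_between a b e c x); auto).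
  - apply (smooth_ex_derive_snd a b e); auto.
  - apply (continuous_snd_slice (D2 u) x t), (smooth_continuous a b e); [apply smooth_D2|..]; auto.
Qed.

Lemma volterra_Ck k : forall c u v, Ie c -> smooth u -> smooth v -> Ck (inIe2 a b e) k (volterra c u v).
Proof.
  induction k as [|k IH]; intros c u v Hc Hu Hv.
  all: assert (Hcont : forall p, inIe2 a b e p ->
                 continuous (fun q : R * R => volterra c u v (fst q) (snd q)) p)
         by (intros [x y] [Hx Hy]; apply (volterra_continuous a b e); auto; apply smooth_continuous2; auto).
  - split; auto.
  - split; [exact Hcont|]. split; [|split].
    + intros [x y] [Hx Hy]. split; eexists;
        [apply volterra_derive_fst | apply volterra_derive_snd]; assumption.
    + apply (Ck_ext _ (open_inIe2 a b e) k
               (fun x y => volterra c (D1 u) v x y + (u x c + volterra c (D2 u) (fun _ _ => 1) x y) * v x y)).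
      * intros x y [Hx Hy]. symmetry. apply is_derive_unique.
        rewrite <- diag_volterra by assumption. apply volterra_derive_fst; assumption.
      * apply Ck_plus; [apply open_inIe2 | apply IH; [| apply smooth_D1 |]; assumption |].
        apply Ck_mult; [apply open_inIe2 | | apply Hv].
        apply Ck_plus; [apply open_inIe2 | apply (smooth_fix_snd a b e u c Hc Hu) |].
        apply IH; [| apply smooth_D2 | apply smooth_const]; assumption.
    + apply (Ck_ext _ (open_inIe2 a b e) k (volterra c u (D2 v))).
      * intros x y [Hx Hy]. symmetry. apply is_derive_unique, volterra_derive_snd; assumption.
      * apply IH; [| | apply smooth_D2]; assumption.
Qed.

Lemma smooth_volterra c u v : Ie c -> smooth u -> smooth v -> smooth (volterra c u v).
Proof. intros Hc Hu Hv k. apply volterra_Ck; assumption. Qed.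

Lemma smooth_diag u c : Ie c -> smooth u -> smooth (fun x _ => u x x).
Proof.
  intros Hc Hu. apply (smooth_ext a b e (fun x y => u x c + volterra c (D2 u) (fun _ _ => 1) x y)).
  - intros x y Hx _. symmetry. apply diag_volterra; assumption.
  - apply smooth_plus; [apply smooth_fix_snd; assumption|].
    apply smooth_volterra; [| apply smooth_D2 | apply smooth_const]; assumption.
Qed.

Definition diag_derive (i : nat) (u v : R -> R -> R) : R -> R -> R :=
  fun x y => Derive_n (fun t => u x t * v t y) i x.

Lemma smooth_diag_derive c i : Ie c -> forall u v, smooth u -> smooth v -> smooth (diag_derive i u v).
Proof.
  intros Hc. induction i as [|i IH]; intros u v Hu Hv.
  - apply smooth_mult; [apply (smooth_diag u c) | ]; assumption.
  - apply (smooth_ext a b e (fun x y => diag_derive i (D2 u) v x y + diag_derive i u (D1 v) x y));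
      [|apply smooth_plus; apply IH; auto using smooth_D1, smooth_D2].
    intros x y Hx Hy. unfold diag_derive.
    rewrite <- (Rmult_1_l (Derive_n _ i x)), <- (Rmult_1_l (Derive_n (fun t => u x t * D1 v t y) i x)).
    rewrite <- (Derive_n_lincomb a b e)
      by (assumption || (apply smooth1_mult; [apply smooth1_row | apply smooth1_col];
                          auto using smooth_D1, smooth_D2)).
    rewrite <- Nat.add_1_r, <- Derive_n_comp. apply Derive_n_ext_loc.
    apply (filter_imp Ie); [|apply open_inIe, Hx]. intros t Ht. simpl.
    rewrite (Derive_mult (fun t => u x t) (fun t => v t y));
      [unfold D1, D2; ring | apply (smooth_ex_derive_snd a b e) | apply (smooth_ex_derive_fst a b e)]; auto.
Qed.

End Volterra_smooth.

(** * Complex-valued functions *)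

Lemma C_ext (z w : C) : Re z = Re w -> Im z = Im w -> z = w.
Proof. destruct z, w; unfold Re, Im; simpl; intros -> ->; reflexivity. Qed.

Lemma Re_cDerive_n n g t : Re (cDerive_n n g t) = Derive_n (fun s => Re (g s)) n t.
Proof. revert t; induction n as [|n IH]; intros t; [reflexivity | apply Derive_ext, IH]. Qed.

Lemma Im_cDerive_n n g t : Im (cDerive_n n g t) = Derive_n (fun s => Im (g s)) n t.
Proof. revert t; induction n as [|n IH]; intros t; [reflexivity | apply Derive_ext, IH]. Qed.

Definition ex_cRInt (g : R -> C) (u v : R) : Prop :=
  ex_RInt (fun t => Re (g t)) u v /\ ex_RInt (fun t => Im (g t)) u v.

Lemma RInt_lincomb (f g : R -> R) al be p q : ex_RInt f p q -> ex_RInt g p q ->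
  RInt (fun t => al * f t + be * g t) p q = al * RInt f p q + be * RInt g p q.
Proof.
  intros Hf Hg.
  rewrite (RInt_plus (V := R_CompleteNormedModule) (fun t => al * f t) (fun t => be * g t));
    [| apply (ex_RInt_scal (V := R_NormedModule)); assumption ..].
  replace (RInt (fun t => al * f t) p q) with (al * RInt f p q)
    by (symmetry; exact (RInt_scal (V := R_CompleteNormedModule) f p q al Hf)).
  replace (RInt (fun t => be * g t) p q) with (be * RInt g p q)
    by (symmetry; exact (RInt_scal (V := R_CompleteNormedModule) g p q be Hg)).
  reflexivity.
Qed.

Lemma re_cRInt g u v : Re (cRInt g u v) = RInt (fun t => Re (g t)) u v.
Proof. reflexivity. Qed.

Lemma im_cRInt g u v : Im (cRInt g u v) = RInt (fun t => Im (g t)) u v.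
Proof. reflexivity. Qed.

Lemma cRInt_0 u v : cRInt (fun _ => 0) u v = 0.
Proof.
  unfold cRInt. rewrite !RInt_const. apply C_ext; simpl; unfold scal; simpl; unfold mult; simpl; ring.
Qed.

Lemma cRInt_plus g1 g2 u v : ex_cRInt g1 u v -> ex_cRInt g2 u v ->
  cRInt (fun t => g1 t + g2 t)%C u v = (cRInt g1 u v + cRInt g2 u v)%C.
Proof.
  intros [R1 I1] [R2 I2]. apply C_ext; rewrite ?re_plus, ?im_plus, ?re_cRInt, ?im_cRInt.
  - rewrite (RInt_ext _ (fun t => 1 * Re (g1 t) + 1 * Re (g2 t)))
      by (intros; rewrite re_plus; simpl; ring).
    rewrite RInt_lincomb by assumption. ring.
  - rewrite (RInt_ext _ (fun t => 1 * Im (g1 t) + 1 * Im (g2 t)))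
      by (intros; rewrite im_plus; simpl; ring).
    rewrite RInt_lincomb by assumption. ring.
Qed.

Lemma cRInt_scal z g u v : ex_cRInt g u v -> cRInt (fun t => z * g t)%C u v = (z * cRInt g u v)%C.
Proof.
  intros [Rg Ig]. apply C_ext; rewrite ?re_mult, ?im_mult, ?re_cRInt, ?im_cRInt.
  - rewrite (RInt_ext _ (fun t => Re z * Re (g t) + - Im z * Im (g t)))
      by (intros; rewrite re_mult; simpl; ring).
    rewrite RInt_lincomb by assumption. ring.
  - rewrite (RInt_ext _ (fun t => Re z * Im (g t) + Im z * Re (g t)))
      by (intros; rewrite im_mult; simpl; ring).
    rewrite RInt_lincomb by assumption. ring.
Qed.

Lemma cRInt_minus g1 g2 u v : ex_cRInt g1 u v -> ex_cRInt g2 u v ->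
  cRInt (fun t => g1 t - g2 t)%C u v = (cRInt g1 u v - cRInt g2 u v)%C.
Proof.
  intros [R1 I1] [R2 I2]. apply C_ext; unfold Cminus; rewrite ?re_plus, ?im_plus, ?re_cRInt, ?im_cRInt.
  - rewrite (RInt_ext _ (fun t => 1 * Re (g1 t) + -1 * Re (g2 t)))
      by (intros; unfold Cminus, Re, Im; simpl; ring).
    rewrite RInt_lincomb by assumption. simpl. ring.
  - rewrite (RInt_ext _ (fun t => 1 * Im (g1 t) + -1 * Im (g2 t)))
      by (intros; unfold Cminus, Re, Im; simpl; ring).
    rewrite RInt_lincomb by assumption. simpl. ring.
Qed.

Lemma cRInt_ext_inI f g a b : a <= b -> (forall x, inI a b x -> f x = g x) -> cRInt f a b = cRInt g a b.
Proof.
  intros Hab Hfg. unfold cRInt.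
  f_equal; apply RInt_ext; intros x Hx; rewrite Rmin_left, Rmax_right in Hx by exact Hab;
    rewrite (Hfg x) by (unfold inI; lra); reflexivity.
Qed.

Definition Re2 (f : R -> R -> C) : R -> R -> R := fun x y => Re (f x y).
Definition Im2 (f : R -> R -> C) : R -> R -> R := fun x y => Im (f x y).

Section Complex_smooth.

Variables a b e : R.
Local Notation Ie := (inIe a b e).
Local Notation smooth := (smooth a b e).
Local Notation smooth1 := (smooth1 a b e).

Definition csmooth (f : R -> R -> C) : Prop := smooth (Re2 f) /\ smooth (Im2 f).

Definition csmooth1 (g : R -> C) : Prop :=
  smooth1 (fun t => Re (g t)) /\ smooth1 (fun t => Im (g t)).

Definition smooth_kernel (d : Dker) : Prop :=
  csmooth (theta d) /\ List.Forall csmooth (deltas d).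

Lemma csmooth1_ex_cRInt g p q : csmooth1 g -> Ie p -> Ie q -> ex_cRInt g p q.
Proof.
  intros [Rg Ig] Hp Hq. split; apply (ex_RInt_continuous (V := R_CompleteNormedModule));
    intros t Ht; apply (smooth1_continuous a b e); auto; apply (inIe_between a b e p q); auto.
Qed.

Lemma csmooth1_continuous_Re_Im g t : csmooth1 g -> Ie t ->
  continuous (fun s => Re (g s)) t /\ continuous (fun s => Im (g s)) t.
Proof. intros [Rg Ig] Ht. split; apply (smooth1_continuous a b e); assumption. Qed.

Lemma csmooth1_minus g h : csmooth1 g -> csmooth1 h -> csmooth1 (fun t => g t - h t)%C.
Proof.
  intros [Rg Ig] [Rh Ih].
  split; [exact (smooth1_minus a b e _ _ Rg Rh) | exact (smooth1_minus a b e _ _ Ig Ih)].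
Qed.

Lemma csmooth1_mult g h : csmooth1 g -> csmooth1 h -> csmooth1 (fun t => g t * h t)%C.
Proof.
  intros [Rg Ig] [Rh Ih]. split; unfold smooth1 in *; simpl.
  - apply smooth_minus; apply smooth_mult; assumption.
  - apply smooth_plus; apply smooth_mult; assumption.
Qed.

Lemma csmooth1_const z : csmooth1 (fun _ => z).
Proof. split; [exact (smooth_const a b e (Re z)) | exact (smooth_const a b e (Im z))]. Qed.

Lemma csmooth1_scal z g : csmooth1 g -> csmooth1 (fun t => z * g t)%C.
Proof. apply csmooth1_mult, csmooth1_const. Qed.

Lemma csmooth1_conj g : csmooth1 g -> csmooth1 (fun t => Cconj (g t)).
Proof.
  intros [Rg Ig]. split; [exact Rg|].
  apply (smooth_ext a b e (fun s _ => -1 * Im (g s))); [intros; unfold Im; simpl; ring|].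
  apply smooth1_scal, Ig.
Qed.

Lemma csmooth1_row f x : Ie x -> csmooth f -> csmooth1 (fun t => f x t).
Proof.
  intros Hx [Rf If].
  split; [exact (smooth1_row a b e _ x Hx Rf) | exact (smooth1_row a b e _ x Hx If)].
Qed.

Lemma csmooth1_col f y : Ie y -> csmooth f -> csmooth1 (fun t => f t y).
Proof.
  intros Hy [Rf If].
  split; [exact (smooth1_col a b e _ y Hy Rf) | exact (smooth1_col a b e _ y Hy If)].
Qed.

Lemma csmooth_tensor g h : csmooth1 g -> csmooth1 h -> csmooth (fun x y => g x * h y)%C.
Proof.
  intros [Rg Ig] [Rh Ih]. split; simpl.
  - apply smooth_minus; apply smooth_tensor; assumption.
  - apply smooth_plus; apply smooth_tensor; assumption.
Qed.

Lemma cDerive_n_plus g1 g2 n x : csmooth1 g1 -> csmooth1 g2 -> Ie x ->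
  cDerive_n n (fun t => g1 t + g2 t)%C x = (cDerive_n n g1 x + cDerive_n n g2 x)%C.
Proof.
  intros [R1 I1] [R2 I2] Hx. apply C_ext; rewrite ?re_plus, ?im_plus.
  - rewrite !Re_cDerive_n, (Derive_n_ext _ (fun t => 1 * Re (g1 t) + 1 * Re (g2 t)))
      by (intros; rewrite re_plus; ring).
    rewrite (Derive_n_lincomb a b e) by assumption. ring.
  - rewrite !Im_cDerive_n, (Derive_n_ext _ (fun t => 1 * Im (g1 t) + 1 * Im (g2 t)))
      by (intros; rewrite im_plus; ring).
    rewrite (Derive_n_lincomb a b e) by assumption. ring.
Qed.

Lemma cDerive_n_scal z g n x : csmooth1 g -> Ie x ->
  cDerive_n n (fun t => z * g t)%C x = (z * cDerive_n n g x)%C.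
Proof.
  intros [Rg Ig] Hx. apply C_ext; rewrite ?re_mult, ?im_mult.
  - rewrite !Re_cDerive_n, Im_cDerive_n, (Derive_n_ext _ (fun t => Re z * Re (g t) + - Im z * Im (g t)))
      by (intros; rewrite re_mult; ring).
    rewrite (Derive_n_lincomb a b e) by assumption. ring.
  - rewrite !Im_cDerive_n, Re_cDerive_n, (Derive_n_ext _ (fun t => Re z * Im (g t) + Im z * Re (g t)))
      by (intros; rewrite im_mult; ring).
    rewrite (Derive_n_lincomb a b e) by assumption. ring.
Qed.

End Complex_smooth.

(** * The action of D *)

Lemma Derive_vanishing a b g x : a < b -> ex_derive g x -> (forall t, inI a b t -> g t = 0) ->
  inI a b x -> Derive g x = 0.
Proof.
  intros Hab [l Hl] Hz Hx. rewrite (is_derive_unique _ _ _ Hl).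
  apply is_derive_Reals in Hl. unfold inI in *.
  destruct (Req_dec l 0) as [E|NE]; [exact E|]. exfalso.
  destruct (Hl (Rabs l) (Rabs_pos_lt _ NE)) as [dl Hd]. pose proof (cond_pos dl) as Hdl.
  (* as a < b, some x + h with 0 < |h| < dl stays in [a,b], where the difference quotient is 0 *)
  assert (Hq : exists h, h <> 0 /\ Rabs h < dl /\ a <= x + h <= b).
  { destruct (Rlt_dec x b) as [Hxb|Hxb].
    - exists (Rmin (dl / 2) (b - x)). pose proof (Rmin_l (dl / 2) (b - x)).
      pose proof (Rmin_r (dl / 2) (b - x)). assert (0 < Rmin (dl / 2) (b - x)) by (apply Rmin_pos; lra).
      rewrite Rabs_right; lra.
    - exists (- Rmin (dl / 2) (x - a)). pose proof (Rmin_l (dl / 2) (x - a)).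
      pose proof (Rmin_r (dl / 2) (x - a)). assert (0 < Rmin (dl / 2) (x - a)) by (apply Rmin_pos; lra).
      rewrite Rabs_Ropp, Rabs_right; lra. }
  destruct Hq as [h [Hh0 [Hhd Hxh]]].
  specialize (Hd h Hh0 Hhd). rewrite (Hz (x + h)), (Hz x) in Hd by assumption.
  replace ((0 - 0) / h - l) with (- l) in Hd by (field; assumption).
  rewrite Rabs_Ropp in Hd. lra.
Qed.

Section Action.

Variables a b e : R.
Hypotheses (Hab : a < b) (He : 0 < e).
Local Notation Ie := (inIe a b e).
Local Notation csmooth := (csmooth a b e).
Local Notation csmooth1 := (csmooth1 a b e).
Local Notation smooth_kernel := (smooth_kernel a b e).

Lemma inIe_left : Ie a.
Proof. unfold inIe; lra. Qed.

Lemma Re_cDerive_n_kernel c phi i x y : csmooth c -> csmooth phi -> Ie x -> Ie y ->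
  Re (cDerive_n i (fun t => c x t * phi t y)%C x)
  = diag_derive i (Re2 c) (Re2 phi) x y - diag_derive i (Im2 c) (Im2 phi) x y.
Proof.
  intros [Rc Ic] [Rp Ip] Hx Hy. unfold diag_derive.
  rewrite Re_cDerive_n,
    (Derive_n_ext _ (fun t => 1 * (Re2 c x t * Re2 phi t y) + -1 * (Im2 c x t * Im2 phi t y)))
    by (intros; rewrite re_mult; unfold Re2, Im2; ring).
  rewrite (Derive_n_lincomb a b e)
    by (assumption || (apply smooth1_mult; [apply smooth1_row | apply smooth1_col]; assumption)).
  ring.
Qed.

Lemma Im_cDerive_n_kernel c phi i x y : csmooth c -> csmooth phi -> Ie x -> Ie y ->
  Im (cDerive_n i (fun t => c x t * phi t y)%C x)
  = diag_derive i (Re2 c) (Im2 phi) x y + diag_derive i (Im2 c) (Re2 phi) x y.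
Proof.
  intros [Rc Ic] [Rp Ip] Hx Hy. unfold diag_derive.
  rewrite Im_cDerive_n,
    (Derive_n_ext _ (fun t => 1 * (Re2 c x t * Im2 phi t y) + 1 * (Im2 c x t * Re2 phi t y)))
    by (intros; rewrite im_mult; unfold Re2, Im2; ring).
  rewrite (Derive_n_lincomb a b e)
    by (assumption || (apply smooth1_mult; [apply smooth1_row | apply smooth1_col]; assumption)).
  ring.
Qed.

Lemma Re_cRInt_kernel c phi x y : csmooth c -> csmooth phi -> Ie x -> Ie y ->
  Re (cRInt (fun t => c x t * phi t y)%C a x)
  = volterra a (Re2 c) (Re2 phi) x y - volterra a (Im2 c) (Im2 phi) x y.
Proof.
  intros [Rc Ic] [Rp Ip] Hx Hy. unfold volterra. rewrite re_cRInt.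
  rewrite (RInt_ext _ (fun t => 1 * (Re2 c x t * Re2 phi t y) + -1 * (Im2 c x t * Im2 phi t y)))
    by (intros; rewrite re_mult; unfold Re2, Im2; simpl; ring).
  rewrite RInt_lincomb; [ring|..];
    apply (ex_RInt_kernel a b e); auto using smooth_continuous2, inIe_left.
Qed.

Lemma Im_cRInt_kernel c phi x y : csmooth c -> csmooth phi -> Ie x -> Ie y ->
  Im (cRInt (fun t => c x t * phi t y)%C a x)
  = volterra a (Re2 c) (Im2 phi) x y + volterra a (Im2 c) (Re2 phi) x y.
Proof.
  intros [Rc Ic] [Rp Ip] Hx Hy. unfold volterra. rewrite im_cRInt.
  rewrite (RInt_ext _ (fun t => 1 * (Re2 c x t * Im2 phi t y) + 1 * (Im2 c x t * Re2 phi t y)))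
    by (intros; rewrite im_mult; unfold Re2, Im2; simpl; ring).
  rewrite RInt_lincomb; [ring|..];
    apply (ex_RInt_kernel a b e); auto using smooth_continuous2, inIe_left.
Qed.

Lemma csmooth_act_deltas phi l : csmooth phi -> List.Forall csmooth l ->
  forall i, csmooth (fun x y => act_deltas l i (fun t => phi t y) x).
Proof.
  intros Hphi Hl. pose proof Hphi as [Rp Ip].
  induction Hl as [|c l Hc Hl IH]; intros i.
  - split; exact (smooth_const a b e 0).
  - destruct (IH (S i)) as [IHr IHi]. pose proof Hc as [Rc Ic].
    assert (Hdd : forall u v, smooth a b e u -> smooth a b e v -> smooth a b e (diag_derive i u v))
      by (apply (smooth_diag_derive a b e a), inIe_left).
    split.
    + apply (smooth_ext a b e (fun x y => diag_derive i (Re2 c) (Re2 phi) x y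
                                          - diag_derive i (Im2 c) (Im2 phi) x y
                                          + Re2 (fun x y => act_deltas l (S i) (fun t => phi t y) x) x y));
        [|apply smooth_plus; [apply smooth_minus; apply Hdd|]; assumption].
      intros x y Hx Hy. symmetry. unfold Re2 at 1. simpl act_deltas.
      rewrite re_plus, Re_cDerive_n_kernel by assumption. reflexivity.
    + apply (smooth_ext a b e (fun x y => diag_derive i (Re2 c) (Im2 phi) x y
                                          + diag_derive i (Im2 c) (Re2 phi) x y
                                          + Im2 (fun x y => act_deltas l (S i) (fun t => phi t y) x) x y));
        [|apply smooth_plus; [apply smooth_plus; apply Hdd|]; assumption].
      intros x y Hx Hy. symmetry. unfold Im2 at 1. simpl act_deltas.
      rewrite im_plus, Im_cDerive_n_kernel by assumption. reflexivity.
Qed.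

Lemma csmooth_star_fun d phi : smooth_kernel d -> csmooth phi -> csmooth (star_fun a d phi).
Proof.
  intros [Ht Hl] Hphi. pose proof Ht as [Rt It]. pose proof Hphi as [Rp Ip].
  destruct (csmooth_act_deltas phi (deltas d) Hphi Hl 0) as [Dr Di].
  assert (Hv : forall u v, smooth a b e u -> smooth a b e v -> smooth a b e (volterra a u v))
    by (intros u v Hu Hv; apply smooth_volterra; [apply inIe_left | assumption ..]).
  split.
  - apply (smooth_ext a b e (fun x y => volterra a (Re2 (theta d)) (Re2 phi) x y
                                        - volterra a (Im2 (theta d)) (Im2 phi) x y
                                        + Re2 (fun x y => act_deltas (deltas d) 0 (fun t => phi t y) x) x y));
      [|apply smooth_plus; [apply smooth_minus; apply Hv|]; assumption].
    intros x y Hx Hy. symmetry. unfold Re2 at 1, star_fun, act.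
    rewrite re_plus, Re_cRInt_kernel by assumption. reflexivity.
  - apply (smooth_ext a b e (fun x y => volterra a (Re2 (theta d)) (Im2 phi) x y
                                        + volterra a (Im2 (theta d)) (Re2 phi) x y
                                        + Im2 (fun x y => act_deltas (deltas d) 0 (fun t => phi t y) x) x y));
      [|apply smooth_plus; [apply smooth_plus; apply Hv|]; assumption].
    intros x y Hx Hy. symmetry. unfold Im2 at 1, star_fun, act.
    rewrite im_plus, Im_cRInt_kernel by assumption. reflexivity.
Qed.

Lemma csmooth1_act d g : smooth_kernel d -> csmooth1 g -> csmooth1 (act a d g).
Proof.
  intros Hd Hg. apply (csmooth1_col a b e (star_fun a d (fun s _ => g s)) a inIe_left).
  apply csmooth_star_fun; assumption.
Qed.

Lemma csmooth1_kernel_slice c g x : csmooth c -> csmooth1 g -> Ie x -> csmooth1 (fun t => c x t * g t)%C.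
Proof. intros Hc Hg Hx. apply csmooth1_mult; [apply csmooth1_row|]; assumption. Qed.

Lemma ex_cRInt_kernel_slice c g x : csmooth c -> csmooth1 g -> Ie x ->
  ex_cRInt (fun t => c x t * g t)%C a x.
Proof.
  intros Hc Hg Hx. apply (csmooth1_ex_cRInt a b e); [apply csmooth1_kernel_slice | apply inIe_left |];
    assumption.
Qed.

Lemma act_deltas_plus l g1 g2 x : List.Forall csmooth l -> csmooth1 g1 -> csmooth1 g2 -> Ie x ->
  forall i, act_deltas l i (fun t => g1 t + g2 t)%C x = (act_deltas l i g1 x + act_deltas l i g2 x)%C.
Proof.
  intros Hl H1 H2 Hx. induction Hl as [|c l Hc Hl IH]; intros i; simpl; [ring|].
  rewrite IH.
  replace (fun t => c x t * (g1 t + g2 t))%C with (fun t => c x t * g1 t + c x t * g2 t)%C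
    by (apply functional_extensionality; intro; ring).
  rewrite (cDerive_n_plus a b e) by auto using csmooth1_kernel_slice.
  ring.
Qed.

Lemma act_deltas_scal l z g x : List.Forall csmooth l -> csmooth1 g -> Ie x ->
  forall i, act_deltas l i (fun t => z * g t)%C x = (z * act_deltas l i g x)%C.
Proof.
  intros Hl Hg Hx. induction Hl as [|c l Hc Hl IH]; intros i; simpl; [ring|].
  rewrite IH.
  replace (fun t => c x t * (z * g t))%C with (fun t => z * (c x t * g t))%C
    by (apply functional_extensionality; intro; ring).
  rewrite (cDerive_n_scal a b e) by auto using csmooth1_kernel_slice.
  ring.
Qed.

Lemma act_plus d g1 g2 x : smooth_kernel d -> csmooth1 g1 -> csmooth1 g2 -> Ie x ->
  act a d (fun t => g1 t + g2 t)%C x = (act a d g1 x + act a d g2 x)%C.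
Proof.
  intros [Ht Hl] H1 H2 Hx. unfold act.
  replace (fun t => theta d x t * (g1 t + g2 t))%C
    with (fun t => theta d x t * g1 t + theta d x t * g2 t)%C
    by (apply functional_extensionality; intro; ring).
  rewrite cRInt_plus, act_deltas_plus by auto using ex_cRInt_kernel_slice.
  ring.
Qed.

Lemma act_scal d z g x : smooth_kernel d -> csmooth1 g -> Ie x ->
  act a d (fun t => z * g t)%C x = (z * act a d g x)%C.
Proof.
  intros [Ht Hl] Hg Hx. unfold act.
  replace (fun t => theta d x t * (z * g t))%C with (fun t => z * (theta d x t * g t))%C
    by (apply functional_extensionality; intro; ring).
  rewrite cRInt_scal, act_deltas_scal by auto using ex_cRInt_kernel_slice.
  ring.
Qed.

Lemma act_minus d g1 g2 x : smooth_kernel d -> csmooth1 g1 -> csmooth1 g2 -> Ie x ->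
  act a d (fun t => g1 t - g2 t)%C x = (act a d g1 x - act a d g2 x)%C.
Proof.
  intros Hd H1 H2 Hx.
  replace (fun t => g1 t - g2 t)%C with (fun t => g1 t + (-1) * g2 t)%C
    by (apply functional_extensionality; intro; ring).
  rewrite act_plus, act_scal by (assumption || apply csmooth1_scal; assumption). ring.
Qed.

Lemma Derive_n_vanishing h n x : smooth1 a b e h -> (forall t, inI a b t -> h t = 0) -> inI a b x ->
  Derive_n h n x = 0.
Proof.
  intros Hh Hz. revert x; induction n as [|n IH]; intros x Hx; [apply Hz, Hx|].
  apply (Derive_vanishing a b); auto.
  apply (smooth1_ex_derive_n a b e h (S n)); [assumption | apply inI_inIe; assumption].
Qed.

Lemma cDerive_n_vanishing g n x : csmooth1 g -> (forall t, inI a b t -> g t = 0) -> inI a b x ->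
  cDerive_n n g x = 0.
Proof.
  intros [Rg Ig] Hz Hx. apply C_ext; rewrite ?Re_cDerive_n, ?Im_cDerive_n;
    (apply Derive_n_vanishing; [assumption | | assumption];
     intros t Ht; rewrite Hz by assumption; reflexivity).
Qed.

Lemma act_vanishing d g x : smooth_kernel d -> csmooth1 g -> (forall t, inI a b t -> g t = 0) ->
  inI a b x -> act a d g x = 0.
Proof.
  intros [Ht Hl] Hg Hz Hx. unfold act.
  replace (cRInt (fun t => theta d x t * g t)%C a x) with (cRInt (fun _ => 0) a x).
  2:{ unfold cRInt. f_equal; apply RInt_ext; intros t Ht'; rewrite Rmin_left, Rmax_right in Ht' by apply Hx;
      rewrite Hz by (unfold inI in *; lra); simpl; ring. }
  replace (act_deltas (deltas d) 0 g x) with (RtoC 0).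
  { rewrite cRInt_0. ring. }
  generalize 0%nat. induction Hl as [|c l Hc Hl IH]; intros i; simpl; [reflexivity|].
  rewrite <- IH, cDerive_n_vanishing; [ring | apply csmooth1_kernel_slice; auto using inI_inIe | | exact Hx].
  intros t Ht'. rewrite Hz by assumption. ring.
Qed.

Lemma act_congr d g1 g2 x : smooth_kernel d -> csmooth1 g1 -> csmooth1 g2 ->
  (forall t, inI a b t -> g1 t = g2 t) -> inI a b x -> act a d g1 x = act a d g2 x.
Proof.
  intros Hd H1 H2 Hg Hx.
  transitivity ((act a d g1 x - act a d g2 x) + act a d g2 x)%C; [ring|].
  rewrite <- act_minus, act_vanishing; auto using inI_inIe.
  - ring.
  - apply csmooth1_minus; assumption.
  - intros t Ht. rewrite Hg by assumption. ring.
Qed.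

End Action.

(** * Inv(D) acts by automorphisms *)

Lemma RInt_nonneg_eq_0 h a b : a < b -> (forall x, inI a b x -> continuous h x) ->
  (forall x, inI a b x -> 0 <= h x) -> RInt h a b = 0 -> forall x, inI a b x -> h x = 0.
Proof.
  unfold inI. intros Hab Hc Hp HI x0 Hx0. destruct (Hp x0 Hx0) as [Hlt|Heq]; [exfalso | auto].
  destruct (proj1 (filterlim_locally _ _) (Hc x0 Hx0) (mkposreal _ (Rdiv_lt_0_compat _ 2 Hlt Rlt_0_2)))
    as [dl Hd].
  pose proof (cond_pos dl) as Hdl.
  set (p := Rmax a (x0 - dl / 2)). set (q := Rmin b (x0 + dl / 2)).
  assert (Hp1 : a <= p) by apply Rmax_l. assert (Hq1 : q <= b) by apply Rmin_l.
  assert (Hpq : p < q /\ forall t, p <= t <= q -> Rabs (t - x0) < dl).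
  { unfold p, q, Rmax, Rmin. repeat destruct Rle_dec; split; try lra; intros t Ht; apply Rabs_def1; lra. }
  destruct Hpq as [Hpq Hin].
  assert (Hint : forall u v, a <= u -> u <= v -> v <= b -> ex_RInt h u v).
  { intros u v Hu Huv Hv. apply (ex_RInt_continuous (V := R_CompleteNormedModule)).
    intros z Hz. rewrite Rmin_left, Rmax_right in Hz by lra. apply Hc. lra. }
  assert (P1 : 0 <= RInt h a p) by (apply RInt_ge_0; [lra | apply Hint; lra | intros; apply Hp; lra]).
  assert (P3 : 0 <= RInt h q b) by (apply RInt_ge_0; [lra | apply Hint; lra | intros; apply Hp; lra]).
  assert (P2 : 0 < RInt h p q).
  { apply RInt_gt_0; [lra | | intros; apply Hc; lra].
    intros t Ht. assert (Ht' := Hd t (Hin t ltac:(lra))).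
    change (Rabs (h t - h x0) < h x0 / 2) in Ht'. apply Rabs_def2 in Ht'. lra. }
  rewrite <- (RInt_Chasles h a q b), <- (RInt_Chasles h a p q) in HI by (apply Hint; lra).
  simpl in HI. unfold plus in HI; simpl in HI. lra.
Qed.

Lemma csmooth1_normsq_eq_0 a b e g : a < b -> 0 < e -> csmooth1 a b e g ->
  cRInt (fun x => Cconj (g x) * g x)%C a b = 0 -> forall x, inI a b x -> g x = 0.
Proof.
  intros Hab He Hg HI x Hx.
  assert (Hn : forall x, inI a b x -> Re (g x) * Re (g x) + Im (g x) * Im (g x) = 0).
  { apply RInt_nonneg_eq_0; auto.
    - intros z Hz. destruct (csmooth1_continuous_Re_Im a b e g z Hg (inI_inIe a b e z He Hz)) as [C1 C2].
      exact (continuous_plus _ _ _ (continuous_mult _ _ _ C1 C1) (continuous_mult _ _ _ C2 C2)).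
    - intros; nra.
    - transitivity (Re (cRInt (fun x => Cconj (g x) * g x)%C a b)); [|rewrite HI; reflexivity].
      rewrite re_cRInt. apply RInt_ext. intros t _. unfold Cconj, Re, Im; simpl; ring. }
  specialize (Hn x Hx). apply C_ext; simpl; unfold Re, Im in *; nra.
Qed.

Lemma at_right_0_ex (P : R -> Prop) : at_right 0 P -> exists r, 0 < r /\ P r.
Proof.
  intros [eps H]. pose proof (cond_pos eps). exists (eps / 2). split; [lra|].
  apply H; [|lra]. change (Rabs (eps / 2 - 0) < eps). rewrite Rminus_0_r, Rabs_right; lra.
Qed.

Lemma smooth_nbhd_csmooth a b f : a <= b -> smooth_nbhd a b f -> at_right 0 (fun r => csmooth a b r f).
Proof.
  intros Hab [U [HU [HI Hk]]]. destruct (inIe2_subset_open a b U Hab HU HI) as [r [Hr HB]].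
  exists (mkposreal r Hr). intros r' Hr' Hpos.
  change (Rabs (r' - 0) < r) in Hr'. rewrite Rminus_0_r, Rabs_right in Hr' by lra.
  assert (Hsub : forall p, inIe2 a b r' p -> U p)
    by (intros p [H1 H2]; apply HB; split; apply (inIe_le a b r r'); auto; lra).
  split; intros k; apply (Ck_subset U); auto; apply Hk.
Qed.

Lemma inD_smooth_kernel a b d : a <= b -> inD a b d -> at_right 0 (fun r => smooth_kernel a b r d).
Proof.
  intros Hab [Ht Hl]. apply filter_and; [apply smooth_nbhd_csmooth; assumption|].
  induction Hl as [|f l Hf Hl IH]; [apply filter_forall; constructor|].
  apply (filter_imp (fun r => csmooth a b r f /\ List.Forall (csmooth a b r) l));
    [intros r []; constructor; assumption | apply filter_and; auto using smooth_nbhd_csmooth].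
Qed.

Lemma smooth_nbhd_of_csmooth a b r f : 0 < r -> csmooth a b r f -> smooth_nbhd a b f.
Proof.
  intros Hr [H1 H2]. exists (inIe2 a b r). split; [apply open_inIe2|]. split.
  - intros x y [Hx Hy]. split; apply inI_inIe; assumption.
  - intros k. split; [apply H1 | apply H2].
Qed.

Section Star_fun.

Variables a b r : R.
Hypotheses (Hab : a < b) (Hr : 0 < r).
Local Notation csmooth := (csmooth a b r).
Local Notation csmooth1 := (csmooth1 a b r).
Variable d : Dker.
Hypothesis Kd : smooth_kernel a b r d.

Lemma csmooth1_slice phi y : inI a b y -> csmooth phi -> csmooth1 (fun t => phi t y).
Proof. intros Hy Hphi. apply csmooth1_col; [apply inI_inIe|]; assumption. Qed.

Lemma star_fun_congr phi psi : csmooth phi -> csmooth psi ->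
  (forall x y, inI2 a b x y -> phi x y = psi x y) ->
  forall x y, inI2 a b x y -> star_fun a d phi x y = star_fun a d psi x y.
Proof.
  intros Hphi Hpsi Heq x y [Hx Hy]. apply (act_congr a b r); auto using csmooth1_slice.
  intros t Ht. apply Heq. split; assumption.
Qed.

Lemma star_fun_plus phi psi : csmooth phi -> csmooth psi ->
  forall x y, inI2 a b x y ->
  star_fun a d (fun u v => phi u v + psi u v)%C x y = (star_fun a d phi x y + star_fun a d psi x y)%C.
Proof. intros Hphi Hpsi x y [Hx Hy]. apply (act_plus a b r); auto using csmooth1_slice, inI_inIe. Qed.

Lemma csmooth1_ex_cRInt_I g : csmooth1 g -> ex_cRInt g a b.
Proof. intros Hg. apply (csmooth1_ex_cRInt a b r); [|apply inI_inIe; [|unfold inI; lra] ..]; assumption. Qed.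

(* χ := φ(·,y0) - ψ(·,y0) is killed by d ⋆ on I, so testing e ⋆ d = δ against conj(χ(x)) χ(y)
   gives ∫_I |χ|² = 0. *)
Lemma star_fun_inj E phi psi : smooth_kernel a b r E -> star_is_delta a b E d ->
  csmooth phi -> csmooth psi ->
  (forall x y, inI2 a b x y -> star_fun a d phi x y = star_fun a d psi x y) ->
  forall x y, inI2 a b x y -> phi x y = psi x y.
Proof.
  intros KE HEd Hphi Hpsi Heq x0 y0 [Hx0 Hy0].
  set (chi := fun t => (phi t y0 - psi t y0)%C).
  assert (Hchi : csmooth1 chi) by (apply csmooth1_minus; apply csmooth1_slice; assumption).
  assert (Hdchi : forall t, inI a b t -> act a d chi t = 0).
  { intros t Ht. unfold chi. rewrite (act_minus a b r) by auto using csmooth1_slice, inI_inIe.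
    apply (proj1 (Ceq_minus _ _)), Heq. split; assumption. }
  assert (Htest : forall x, inI a b x ->
            act a E (fun t => act a d (fun y => Cconj (chi x) * chi y)%C t) x = 0).
  { intros x Hx. apply (act_vanishing a b r); auto.
    - apply csmooth1_act, csmooth1_scal; assumption.
    - intros t Ht. rewrite (act_scal a b r), Hdchi by auto using inI_inIe. ring. }
  apply (proj2 (Ceq_minus _ _)). change (chi x0 = 0). revert x0 Hx0.
  apply (csmooth1_normsq_eq_0 a b r); auto.
  rewrite <- (HEd (fun x y => Cconj (chi x) * chi y)%C)
    by (apply (smooth_nbhd_of_csmooth a b r); auto using csmooth_tensor, csmooth1_conj).
  rewrite (cRInt_ext_inI _ (fun _ => 0) a b (Rlt_le _ _ Hab) Htest). apply cRInt_0.
Qed.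

(* For χ := (d ⋆ (e ⋆ ψ))(·,y0) - ψ(·,y0), testing d ⋆ e = δ against conj(χ(x)) ψ(y,y0) gives
   ∫_I conj(χ) (d ⋆ (e ⋆ ψ))(·,y0) = ∫_I conj(χ) ψ(·,y0), i.e. ∫_I |χ|² = 0. *)
Lemma star_fun_surj E psi : smooth_kernel a b r E -> star_is_delta a b d E -> csmooth psi ->
  forall x y, inI2 a b x y -> star_fun a d (star_fun a E psi) x y = psi x y.
Proof.
  intros KE HdE Hpsi x0 y0 [Hx0 Hy0].
  set (phi := star_fun a E psi).
  assert (Hphi : csmooth phi) by (apply csmooth_star_fun; auto).
  assert (Hdphi : csmooth1 (fun t => star_fun a d phi t y0))
    by (apply csmooth1_slice, csmooth_star_fun; auto).
  set (chi := fun t => (star_fun a d phi t y0 - psi t y0)%C).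
  assert (Hchi : csmooth1 chi) by (apply csmooth1_minus; [|apply csmooth1_slice]; assumption).
  assert (Htest : forall x, inI a b x ->
            act a d (fun t => act a E (fun y => Cconj (chi x) * psi y y0)%C t) x
            = (Cconj (chi x) * star_fun a d phi x y0)%C).
  { intros x Hx. change (star_fun a d phi x y0) with (act a d (fun t => phi t y0) x).
    rewrite <- (act_scal a b r) by auto using csmooth1_slice, inI_inIe.
    apply (act_congr a b r); auto using csmooth1_act, csmooth1_scal, csmooth1_slice.
    intros t Ht. apply (act_scal a b r); auto using csmooth1_slice, inI_inIe. }
  assert (Hdelta : cRInt (fun x => Cconj (chi x) * star_fun a d phi x y0)%C a b
                   = cRInt (fun x => Cconj (chi x) * psi x y0)%C a b).
  { rewrite <- (cRInt_ext_inI _ _ a b (Rlt_le _ _ Hab) Htest).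
    apply (HdE (fun x y => Cconj (chi x) * psi y y0)%C).
    apply (smooth_nbhd_of_csmooth a b r); auto using csmooth_tensor, csmooth1_conj, csmooth1_slice. }
  apply (proj2 (Ceq_minus _ _)). change (chi x0 = 0). revert x0 Hx0.
  apply (csmooth1_normsq_eq_0 a b r); auto.
  replace (fun x => Cconj (chi x) * chi x)%C
    with (fun x => Cconj (chi x) * star_fun a d phi x y0 - Cconj (chi x) * psi x y0)%C
    by (apply functional_extensionality; intro; unfold chi; ring).
  rewrite cRInt_minus, Hdelta
    by (apply csmooth1_ex_cRInt_I, csmooth1_mult; auto using csmooth1_conj, csmooth1_slice).
  ring.
Qed.

End Star_fun.

Theorem theorem6 (a b : R) (hab : a < b) (d : Dker) :
  starInv a b d -> additive_aut_Cinf a b (star_fun a d).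
Proof.
  intros [Hd [E [HE [HdE HEd]]]].
  assert (Hradius : forall phi psi, smooth_nbhd a b phi -> smooth_nbhd a b psi -> exists r, 0 < r /\
            ((smooth_kernel a b r d /\ smooth_kernel a b r E) /\ csmooth a b r phi /\ csmooth a b r psi)).
  { intros phi psi Hphi Hpsi. apply at_right_0_ex.
    apply filter_and; apply filter_and; auto using inD_smooth_kernel, smooth_nbhd_csmooth, Rlt_le. }
  split; [|split; [|split; [|split]]].
  - intros phi Hphi. destruct (Hradius phi phi Hphi Hphi) as [r [Hr [[Kd _] [Sphi _]]]].
    exists (star_fun a d phi). split; [|reflexivity].
    apply (smooth_nbhd_of_csmooth a b r); auto using csmooth_star_fun.
  - intros phi psi Hphi Hpsi. destruct (Hradius phi psi Hphi Hpsi) as [r [Hr [[Kd _] [Sphi Spsi]]]].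
    apply (star_fun_congr a b r); assumption.
  - intros phi psi Hphi Hpsi. destruct (Hradius phi psi Hphi Hpsi) as [r [Hr [[Kd _] [Sphi Spsi]]]].
    apply (star_fun_plus a b r); assumption.
  - intros phi psi Hphi Hpsi. destruct (Hradius phi psi Hphi Hpsi) as [r [Hr [[Kd KE] [Sphi Spsi]]]].
    apply (star_fun_inj a b r hab Hr d Kd E); assumption.
  - intros psi Hpsi. destruct (Hradius psi psi Hpsi Hpsi) as [r [Hr [[Kd KE] [Spsi _]]]].
    exists (star_fun a E psi). split.
    + apply (smooth_nbhd_of_csmooth a b r); auto using csmooth_star_fun.
    + apply (star_fun_surj a b r hab Hr d Kd E); assumption.
Qed.
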